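(* Let $-1\le a<1$ and $\mathfrak g=\mathfrak r_{3,a}$ (basis $\{e_1,e_2,e_3\}$, nonzero brackets $[e_1,e_2]=e_2$, $[e_1,e_3]=ae_3$), and let $\langle\cdot,\cdot\rangle_0$ be the inner product for which $\{e_1,e_2,e_3\}$ is orthonormal. An inner product $\langle\cdot,\cdot\rangle$ on $\mathfrak g$ is a solvsoliton if and only if $[\langle\cdot,\cdot\rangle]=[\langle\cdot,\cdot\rangle_0]$.
   Context: An inner product on a solvable Lie algebra $\mathfrak g$ is a solvsoliton if its Ricci operator satisfies $\mathrm{Ric}=cI+D$ for some $c\in\mathbb R$ and $D\in\mathrm{Der}(\mathfrak g)$ (Ricci operator of the metric Lie algebra defined via the Levi-Civita connection $2\langle\nabla_XY,Z\rangle=\langle[Z,X],Y\rangle+\langle X,[Z,Y]\rangle+\langle[X,Y],Z\rangle$, $R(X,Y)=[\nabla_X,\nabla_Y]-\nabla_{[X,Y]}$, $\mathrm{Ric}(X)=\sum_iR(X,e_i)e_i$ for an orthonormal basis). Two inner products are isometric up to scaling if $\langle\cdot,\cdot\rangle_1=k\langle f\cdot,f\cdot\rangle_2$ for some $k>0$ and Lie algebra automorphism $f$ of $\mathfrak g$; $[\langle\cdot,\cdot\rangle]$ denotes the equivalence class. *)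

(* Vectors of g = r_{3,a} are row vectors 'rV[R]_3 in the
   basis (e_1,e_2,e_3) = (delta 0, delta 1, delta 2). *)
From HB Require Import structures.
From mathcomp Require Import all_boot all_order all_algebra.
Set Implicit Arguments. Unset Strict Implicit. Unset Printing Implicit Defensive.
Import Order.TTheory GRing.Theory Num.Theory.
Local Open Scope ring_scope.

Section R3a.
Variable R : realFieldType.

Definition vec := 'rV[R]_3.

Definition coord3 (u : vec) (i : nat) : R := u ord0 (inord i).

Definition bvec (i : 'I_3) : vec := delta_mx ord0 i.

(* Lie bracket of r_{3,a}: [e1,e2] = e2, [e1,e3] = a e3, others zero *)
Definition br (a : R) (u v : vec) : vec :=
  \row_(k < 3)
    (if val k == 0%N then 0
     else if val k == 1%N then coord3 u 0 * coord3 v 1 - coord3 u 1 * coord3 v 0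
     else a * (coord3 u 0 * coord3 v 2 - coord3 u 2 * coord3 v 0)).

Definition ip (G : 'M[R]_3) (u v : vec) : R := (u *m G *m v^T) ord0 ord0.

Definition is_inner_product (G : 'M[R]_3) : Prop :=
  G^T = G /\ forall v : vec, v != 0 -> 0 < ip G v v.

(* Levi-Civita connection: nabla_X Y is the unique Z0 with
   2<Z0,Z> = <[Z,X],Y> + <X,[Z,Y]> + <[X,Y],Z> for all Z;
   since <Z0, e_k> = (Z0 *m G)_k, Z0 = (1/2) w *m G^{-1}. *)
Definition nabla (a : R) (G : 'M[R]_3) (X Y : vec) : vec :=
  (2%:R)^-1 *: ((\row_(k < 3)
     (ip G (br a (bvec k) X) Y + ip G X (br a (bvec k) Y)
      + ip G (br a X Y) (bvec k))) *m invmx G).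

Definition curv (a : R) (G : 'M[R]_3) (X Y Z : vec) : vec :=
  nabla a G X (nabla a G Y Z) - nabla a G Y (nabla a G X Z)
  - nabla a G (br a X Y) Z.

Definition orthonormal_basis (G : 'M[R]_3) (F : 'I_3 -> vec) : Prop :=
  forall i j : 'I_3, ip G (F i) (F j) = (i == j)%:R.

Definition ricci (a : R) (G : 'M[R]_3) (F : 'I_3 -> vec) (X : vec) : vec :=
  \sum_(i < 3) curv a G X (F i) (F i).

Definition is_derivation (a : R) (D : 'M[R]_3) : Prop :=
  forall u v : vec, br a u v *m D = br a (u *m D) v + br a u (v *m D).

Definition is_automorphism (a : R) (f : 'M[R]_3) : Prop :=
  f \in unitmx /\ forall u v : vec, br a (u *m f) (v *m f) = br a u v *m f.

Definition solvsoliton (a : R) (G : 'M[R]_3) : Prop :=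
  exists F : 'I_3 -> vec, orthonormal_basis G F /\
  exists (c : R) (D : 'M[R]_3), is_derivation a D /\
    forall X : vec, ricci a G F X = c *: X + X *m D.

Definition iso_up_to_scaling (a : R) (G1 G2 : 'M[R]_3) : Prop :=
  exists (k : R) (f : 'M[R]_3), 0 < k /\ is_automorphism a f /\
    forall u v : vec, ip G1 u v = k * ip G2 (u *m f) (v *m f).

End R3a.

From HB Require Import structures.
From mathcomp Require Import all_boot all_order all_algebra.
From mathcomp Require Import reals.
From mathcomp Require Import ring.
Import Order.TTheory GRing.Theory Num.Theory.
Local Open Scope ring_scope.
Set Implicit Arguments. Unset Strict Implicit.

(* An orthonormal basis (f_1, f_2, f_3) of <,> identifies (r_{3,a}, <,>) with R^3
   carrying the dot product and the transported bracket, and transports the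
   Levi-Civita connection, the curvature and the Ricci operator; moreover the
   Ricci operator does not depend on the orthonormal basis used to compute it.
   Gram-Schmidt applied to (e_2, e_3, e_1) gives a basis in which the only nonzero
   brackets are [f_1, f_2] = l f_2 and [f_1, f_3] = m f_2 + l a f_3, with l > 0.
   For this bracket the soliton equation forces m = 0 as soon as a <> 1; then
   phi : e_i |-> f_i / l is an automorphism with <phi., phi.> = l^-2 <,>_0.
   Conversely, if <,> = k <f.,f.>_0 with f an automorphism, the basis
   f^-1(e_i) / sqrt k is orthonormal and has m = 0, and for m = 0 one has
   Ric = c I + D with
   c = -l^2 (1 + a^2) and D = diag(0, l^2 (a^2 - a), l^2 (1 - a)). *)

Section Coordinates.
Variable R : realFieldType.
Local Notation vec := 'rV[R]_3.
Implicit Types (u v : vec) (x y z : R).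

Definition i0 : 'I_3 := @Ordinal 3 0 isT.
Definition i1 : 'I_3 := @Ordinal 3 1 isT.
Definition i2 : 'I_3 := @Ordinal 3 2 isT.

(* Locked, so that [mxE] does not unfold it. *)
Definition row3_def x y z : vec :=
  \row_(k < 3) (if val k == 0%N then x else if val k == 1%N then y else z).
Fact row3_key : unit. Proof. by []. Qed.
Definition row3 := locked_with row3_key row3_def.
Canonical row3_unlockable := [unlockable fun row3].

Lemma row3E0 x y z : row3 x y z ord0 i0 = x. Proof. by rewrite unlock mxE. Qed.
Lemma row3E1 x y z : row3 x y z ord0 i1 = y. Proof. by rewrite unlock mxE. Qed.
Lemma row3E2 x y z : row3 x y z ord0 i2 = z. Proof. by rewrite unlock mxE. Qed.

Lemma vec3P u v : u ord0 i0 = v ord0 i0 -> u ord0 i1 = v ord0 i1 ->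
  u ord0 i2 = v ord0 i2 -> u = v.
Proof.
move=> h0 h1 h2; apply/rowP => -[[|[|[|k]]] Hk] //.
- by rewrite (_ : Ordinal Hk = i0) //; apply: val_inj.
- by rewrite (_ : Ordinal Hk = i1) //; apply: val_inj.
- by rewrite (_ : Ordinal Hk = i2) //; apply: val_inj.
Qed.

Lemma sum_ord3 (V : nmodType) (F : 'I_3 -> V) :
  \sum_(i < 3) F i = F i0 + F i1 + F i2.
Proof.
rewrite !big_ord_recr big_ord0 /= add0r.
by congr (F _ + F _ + F _); apply: val_inj.
Qed.

Lemma vaddE u v i : (u + v) ord0 i = u ord0 i + v ord0 i. Proof. by rewrite mxE. Qed.
Lemma vsubE u v i : (u - v) ord0 i = u ord0 i - v ord0 i. Proof. by rewrite !mxE. Qed.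
Lemma vscaleE c u i : (c *: u) ord0 i = c * u ord0 i. Proof. by rewrite mxE. Qed.

Lemma vmulmxE u (M : 'M[R]_3) j : (u *m M) ord0 j =
  u ord0 i0 * M i0 j + u ord0 i1 * M i1 j + u ord0 i2 * M i2 j.
Proof. by rewrite mxE sum_ord3. Qed.

Lemma coord3E0 u : coord3 u 0 = u ord0 i0.
Proof. by rewrite /coord3; congr (u _ _); apply: val_inj; rewrite /= inordK. Qed.
Lemma coord3E1 u : coord3 u 1 = u ord0 i1.
Proof. by rewrite /coord3; congr (u _ _); apply: val_inj; rewrite /= inordK. Qed.
Lemma coord3E2 u : coord3 u 2 = u ord0 i2.
Proof. by rewrite /coord3; congr (u _ _); apply: val_inj; rewrite /= inordK. Qed.

Lemma brE0 a u v : br a u v ord0 i0 = 0. Proof. by rewrite mxE. Qed.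
Lemma brE1 a u v : br a u v ord0 i1 =
  u ord0 i0 * v ord0 i1 - u ord0 i1 * v ord0 i0.
Proof. by rewrite mxE /= !coord3E0 !coord3E1. Qed.
Lemma brE2 a u v : br a u v ord0 i2 =
  a * (u ord0 i0 * v ord0 i2 - u ord0 i2 * v ord0 i0).
Proof. by rewrite mxE /= !coord3E0 !coord3E2. Qed.

Lemma bvecE (i j : 'I_3) : bvec R i ord0 j = (i == j)%:R.
Proof. by rewrite /bvec mxE eqxx /= eq_sym. Qed.

Lemma bvec0 : bvec R i0 = row3 1 0 0.
Proof. by apply: vec3P; rewrite bvecE ?row3E0 ?row3E1 ?row3E2. Qed.
Lemma bvec1 : bvec R i1 = row3 0 1 0.
Proof. by apply: vec3P; rewrite bvecE ?row3E0 ?row3E1 ?row3E2. Qed.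
Lemma bvec2 : bvec R i2 = row3 0 0 1.
Proof. by apply: vec3P; rewrite bvecE ?row3E0 ?row3E1 ?row3E2. Qed.

Lemma vec3_neq0 u i : u ord0 i = 1 -> u != 0.
Proof. by move=> h; apply: contra_eq_neq h => ->; rewrite mxE eq_sym oner_neq0. Qed.

Lemma ipE (G : 'M[R]_3) u v : ip G u v =
  \sum_(j < 3) \sum_(i < 3) u ord0 i * G i j * v ord0 j.
Proof.
rewrite /ip mxE; apply: eq_bigr => j _; rewrite mxE big_distrl /=.
by apply: eq_bigr => i _; rewrite !mxE.
Qed.

Lemma mul_bvecT u j : (u *m (bvec R j)^T) ord0 ord0 = u ord0 j.
Proof. by rewrite /bvec trmx_delta -colE mxE. Qed.

Lemma mx_entry_bvec (M : 'M[R]_3) i j :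
  M i j = (bvec R i *m M *m (bvec R j)^T) ord0 ord0.
Proof. by rewrite mul_bvecT /bvec -rowE mxE. Qed.

End Coordinates.

Section Bilinearity.
Variable R : realFieldType.
Local Notation vec := 'rV[R]_3.
Implicit Types (u v w X Y Z : vec).
Variables (a : R) (G : 'M[R]_3).

Lemma ip_addl u v w : ip G (u + v) w = ip G u w + ip G v w.
Proof. by rewrite !ipE !sum_ord3 !vaddE; ring. Qed.
Lemma ip_addr u v w : ip G w (u + v) = ip G w u + ip G w v.
Proof. by rewrite !ipE !sum_ord3 !vaddE; ring. Qed.
Lemma ip_scalel c u w : ip G (c *: u) w = c * ip G u w.
Proof. by rewrite !ipE !sum_ord3 !vscaleE; ring. Qed.
Lemma ip_scaler c u w : ip G w (c *: u) = c * ip G w u.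
Proof. by rewrite !ipE !sum_ord3 !vscaleE; ring. Qed.
Lemma ip_subl u v w : ip G (u - v) w = ip G u w - ip G v w.
Proof. by rewrite !ipE !sum_ord3 !vsubE; ring. Qed.

Lemma ip_sym u v : G^T = G -> ip G u v = ip G v u.
Proof.
move=> hs; have s i j : G j i = G i j by rewrite -{1}hs mxE.
rewrite !ipE !sum_ord3 (s i1 i0) (s i2 i0) (s i2 i1); ring.
Qed.

Lemma br_addl u v w : br a (u + v) w = br a u w + br a v w.
Proof. by apply: vec3P; rewrite !vaddE !(brE0, brE1, brE2) ?vaddE; ring. Qed.
Lemma br_addr u v w : br a w (u + v) = br a w u + br a w v.
Proof. by apply: vec3P; rewrite !vaddE !(brE0, brE1, brE2) ?vaddE; ring. Qed.
Lemma br_scalel c u w : br a (c *: u) w = c *: br a u w.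
Proof. by apply: vec3P; rewrite !vscaleE !(brE0, brE1, brE2) ?vscaleE; ring. Qed.
Lemma br_scaler c u w : br a w (c *: u) = c *: br a w u.
Proof. by apply: vec3P; rewrite !vscaleE !(brE0, brE1, brE2) ?vscaleE; ring. Qed.

Definition koszul X Y Z :=
  ip G (br a Z X) Y + ip G X (br a Z Y) + ip G (br a X Y) Z.

Lemma nablaE X Y :
  nabla a G X Y = 2^-1 *: (\row_(k < 3) koszul X Y (bvec R k) *m invmx G).
Proof. by []. Qed.

Lemma koszul_expand X Y Z : koszul X Y Z =
  Z ord0 i0 * koszul X Y (bvec R i0) + Z ord0 i1 * koszul X Y (bvec R i1)
  + Z ord0 i2 * koszul X Y (bvec R i2).
Proof.
rewrite /koszul !ipE !sum_ord3 !brE0 !brE1 !brE2 bvec0 bvec1 bvec2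
  !row3E0 !row3E1 !row3E2.
ring.
Qed.

Ltac koszul_bilin :=
  rewrite /koszul ?br_addr ?br_addl ?br_scaler ?br_scalel
    ?ip_addl ?ip_addr ?ip_scalel ?ip_scaler; ring.

Lemma koszul_addX X1 X2 Y Z : koszul (X1 + X2) Y Z = koszul X1 Y Z + koszul X2 Y Z.
Proof. by koszul_bilin. Qed.
Lemma koszul_addY X Y1 Y2 Z : koszul X (Y1 + Y2) Z = koszul X Y1 Z + koszul X Y2 Z.
Proof. by koszul_bilin. Qed.
Lemma koszul_scaleX c X Y Z : koszul (c *: X) Y Z = c * koszul X Y Z.
Proof. by koszul_bilin. Qed.
Lemma koszul_scaleY c X Y Z : koszul X (c *: Y) Z = c * koszul X Y Z.
Proof. by koszul_bilin. Qed.

Lemma nabla_addX X1 X2 Y : nabla a G (X1 + X2) Y = nabla a G X1 Y + nabla a G X2 Y.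
Proof.
rewrite !nablaE -scalerDr -mulmxDl; congr (_ *: (_ *m _)).
by apply/rowP => k; rewrite !mxE koszul_addX.
Qed.
Lemma nabla_addY X Y1 Y2 : nabla a G X (Y1 + Y2) = nabla a G X Y1 + nabla a G X Y2.
Proof.
rewrite !nablaE -scalerDr -mulmxDl; congr (_ *: (_ *m _)).
by apply/rowP => k; rewrite !mxE koszul_addY.
Qed.
Lemma nabla_scaleX c X Y : nabla a G (c *: X) Y = c *: nabla a G X Y.
Proof.
rewrite !nablaE scalerA mulrC -scalerA scalemxAl; congr (_ *: (_ *m _)).
by apply/rowP => k; rewrite !mxE koszul_scaleX.
Qed.
Lemma nabla_scaleY c X Y : nabla a G X (c *: Y) = c *: nabla a G X Y.
Proof.
rewrite !nablaE scalerA mulrC -scalerA scalemxAl; congr (_ *: (_ *m _)).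
by apply/rowP => k; rewrite !mxE koszul_scaleY.
Qed.

Lemma addrBBACA (V : zmodType) (a1 a2 b1 b2 c1 c2 : V) :
  a1 + a2 - (b1 + b2) - (c1 + c2) = (a1 - b1 - c1) + (a2 - b2 - c2).
Proof. by rewrite !opprD (addrACA a1 a2) (addrACA (a1 - b1)). Qed.

Lemma curv_addY X Y1 Y2 Z : curv a G X (Y1 + Y2) Z = curv a G X Y1 Z + curv a G X Y2 Z.
Proof. by rewrite /curv br_addr !nabla_addX !nabla_addY addrBBACA. Qed.
Lemma curv_addZ X Y Z1 Z2 : curv a G X Y (Z1 + Z2) = curv a G X Y Z1 + curv a G X Y Z2.
Proof. by rewrite /curv !nabla_addY addrBBACA. Qed.
Lemma curv_scaleY c X Y Z : curv a G X (c *: Y) Z = c *: curv a G X Y Z.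
Proof. by rewrite /curv br_scaler !nabla_scaleX !nabla_scaleY !scalerBr. Qed.
Lemma curv_scaleZ c X Y Z : curv a G X Y (c *: Z) = c *: curv a G X Y Z.
Proof. by rewrite /curv !nabla_scaleY !scalerBr. Qed.

End Bilinearity.

Section BasisIndependence.
Variable R : realFieldType.
Local Notation vec := 'rV[R]_3.
Local Notation bv := (bvec R).
Implicit Types (G P : 'M[R]_3) (E F : 'I_3 -> vec).

Definition rows_mx (F : 'I_3 -> vec) : 'M[R]_3 := \matrix_(i, j) F i ord0 j.

Lemma bvec_rows_mx F i : bv i *m rows_mx F = F i.
Proof. by rewrite /bvec -rowE; apply/rowP => j; rewrite !mxE. Qed.

Definition orthoframe (G P : 'M[R]_3) := P *m G *m P^T = 1%:M.

Lemma orthonormal_basis_frame G F :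
  orthonormal_basis G F -> orthoframe G (rows_mx F).
Proof.
move=> hF; apply/matrixP => i j.
rewrite mx_entry_bvec !mulmxA bvec_rows_mx -mulmxA -trmx_mul bvec_rows_mx.
by rewrite -/(ip G (F i) (F j)) hF mxE.
Qed.

Lemma orthoframe_unit G P : orthoframe G P ->
  [/\ P \in unitmx, G \in unitmx & invmx G = P^T *m P].
Proof.
move=> h; have [uP _] : P \in unitmx /\ (G *m P^T) \in unitmx.
  by apply: mulmx1_unit; rewrite mulmxA.
have GPP : G *m (P^T *m P) = 1%:M.
  by rewrite mulmxA; apply: mulmx1C; rewrite mulmxA.
have [uG _] := mulmx1_unit GPP.
by split=> //; rewrite -[invmx G]mulmx1 -GPP mulKmx.
Qed.

Lemma orthonormal_basis_expand G F : orthonormal_basis G F ->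
  forall v, v = \sum_(j < 3) ip G v (F j) *: F j.
Proof.
move=> hF v; have [uP uG iG] := orthoframe_unit (orthonormal_basis_frame hF).
have e : v = v *m G *m (rows_mx F)^T *m rows_mx F.
  by rewrite -!mulmxA -iG mulmxV // mulmx1.
rewrite {1}e mulmx_sum_row; apply: eq_bigr => j _.
congr (_ *: _); last by rewrite rowE bvec_rows_mx.
by rewrite /ip -(bvec_rows_mx F j) trmx_mul !mulmxA mul_bvecT.
Qed.

Lemma bilinear_trace_basis_indep G (T : vec -> vec -> vec)
  (hAl : forall x y z, T (x + y) z = T x z + T y z)
  (hSl : forall c x z, T (c *: x) z = c *: T x z)
  (hAr : forall x y z, T z (x + y) = T z x + T z y)
  (hSr : forall c x z, T z (c *: x) = c *: T z x)
  E F : G^T = G -> orthonormal_basis G E -> orthonormal_basis G F ->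
  \sum_(i < 3) T (F i) (F i) = \sum_(i < 3) T (E i) (E i).
Proof.
move=> hs hE hF.
have sl z (g : 'I_3 -> vec) : T (\sum_(j < 3) g j) z = \sum_(j < 3) T (g j) z.
  apply: (big_morph (T^~ z) (fun x y => hAl x y z)).
  by have := hSl 0 0 z; rewrite !scale0r.
have sr z (g : 'I_3 -> vec) : T z (\sum_(j < 3) g j) = \sum_(j < 3) T z (g j).
  apply: (big_morph (T z) (fun x y => hAr x y z)).
  by have := hSr 0 0 z; rewrite !scale0r.
have ipl w (g : 'I_3 -> vec) : ip G (\sum_(j < 3) g j) w = \sum_(j < 3) ip G (g j) w.
  apply: (big_morph (ip G ^~ w) (fun x y => ip_addl G x y w)).
  by have := ip_scalel G 0 0 w; rewrite scale0r mul0r.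
have -> : \sum_(i < 3) T (F i) (F i) = \sum_(i < 3) \sum_(j < 3) \sum_(k < 3)
    (ip G (F i) (E j) * ip G (F i) (E k)) *: T (E j) (E k).
  apply: eq_bigr => i _.
  rewrite {1 2}(orthonormal_basis_expand hE (F i)) sl; apply: eq_bigr => j _.
  rewrite hSl sr scaler_sumr; apply: eq_bigr => k _.
  by rewrite hSr scalerA.
rewrite exchange_big /=; apply: eq_bigr => j _; rewrite exchange_big /=.
have parseval k : \sum_(i < 3) ip G (F i) (E j) * ip G (F i) (E k) = ip G (E j) (E k).
  rewrite [in RHS](orthonormal_basis_expand hF (E j)) ipl; apply: eq_bigr => i _.
  by rewrite ip_scalel (ip_sym _ _ hs).
under eq_bigr => k _ do rewrite -scaler_suml parseval hE.
rewrite (bigD1 j) //= eqxx scale1r big1 ?addr0 // => k /negbTE.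
by rewrite eq_sym => ->; rewrite scale0r.
Qed.

Lemma ricci_basis_indep a G E F X : G^T = G ->
  orthonormal_basis G E -> orthonormal_basis G F ->
  ricci a G F X = ricci a G E X.
Proof.
move=> hs; apply: (bilinear_trace_basis_indep (T := curv a G X)) => //.
- by move=> *; rewrite curv_addY.
- by move=> *; rewrite curv_scaleY.
- by move=> *; rewrite curv_addZ.
- by move=> *; rewrite curv_scaleZ.
Qed.

End BasisIndependence.

Section EuclideanModel.
Variable R : realFieldType.
Local Notation vec := 'rV[R]_3.
Local Notation bv := (bvec R).
Implicit Types (u v w : vec) (b : vec -> vec -> vec) (G P : 'M[R]_3).

Definition dot u v :=
  u ord0 i0 * v ord0 i0 + u ord0 i1 * v ord0 i1 + u ord0 i2 * v ord0 i2.

Definition std_nabla b u v : vec :=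
  2^-1 *: \row_(k < 3) (dot (b (bv k) u) v + dot u (b (bv k) v) + dot (b u v) (bv k)).

Definition std_curv b u v w : vec :=
  std_nabla b u (std_nabla b v w) - std_nabla b v (std_nabla b u w)
  - std_nabla b (b u v) w.

Definition std_ricci b u : vec := \sum_(i < 3) std_curv b u (bv i) (bv i).

Definition is_derivation_for b (D : 'M[R]_3) :=
  forall u v, b u v *m D = b (u *m D) v + b u (v *m D).

Definition std_soliton b := exists (c : R) (D : 'M[R]_3),
  is_derivation_for b D /\ forall u, std_ricci b u = c *: u + u *m D.

Lemma ip_id_dot u v : ip 1%:M u v = dot u v.
Proof. by rewrite /ip mulmx1 mxE sum_ord3 /dot !mxE. Qed.

Lemma dot_bvec i j : dot (bv i) (bv j) = (i == j)%:R.
Proof. by rewrite -ip_id_dot /ip -mx_entry_bvec mxE. Qed.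

Definition bracket_in_frame a (P : 'M[R]_3) b :=
  forall u v, br a (u *m P) (v *m P) = b u v *m P.

Lemma orthoframe_ipP G (P : 'M[R]_3) :
  orthoframe G P <-> forall u v, ip G (u *m P) (v *m P) = dot u v.
Proof.
split=> [h u v | h].
  rewrite /ip trmx_mul !mulmxA -(mulmxA u) -(mulmxA u) h mulmx1.
  by rewrite mxE sum_ord3 /dot !mxE.
apply/matrixP => i j; rewrite mx_entry_bvec !mulmxA -mulmxA -trmx_mul.
by rewrite -/(ip G _ _) h dot_bvec mxE.
Qed.

Lemma orthoframe_basis G P :
  orthoframe G P -> orthonormal_basis G (fun i => bv i *m P).
Proof. by move/orthoframe_ipP=> h i j; rewrite h dot_bvec. Qed.

Section Transport.
Variables (a : R) (G P : 'M[R]_3) (b : vec -> vec -> vec).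
Hypotheses (hP : orthoframe G P) (hb : bracket_in_frame a P b).

Lemma nabla_orthoframe u v : nabla a G (u *m P) (v *m P) = std_nabla b u v *m P.
Proof.
have [uP uG iG] := orthoframe_unit hP.
have ipP := (orthoframe_ipP G P).1 hP.
rewrite nablaE /std_nabla iG mulmxA scalemxAl; congr (_ *: _ *m P).
have koszulP k : koszul a G (u *m P) (v *m P) (bv k *m P) =
    dot (b (bv k) u) v + dot u (b (bv k) v) + dot (b u v) (bv k).
  by rewrite /koszul !hb !ipP.
apply: vec3P; rewrite vmulmxE !mxE -!koszulP [RHS]koszul_expand !vmulmxE !bvecE /=;
  ring.
Qed.

Lemma curv_orthoframe u v w :
  curv a G (u *m P) (v *m P) (w *m P) = std_curv b u v w *m P.
Proof. by rewrite /curv /std_curv hb !nabla_orthoframe !mulmxBl. Qed.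

Lemma ricci_orthoframe u :
  ricci a G (fun i => bv i *m P) (u *m P) = std_ricci b u *m P.
Proof.
rewrite /ricci /std_ricci mulmx_suml.
by apply: eq_bigr => i _; rewrite curv_orthoframe.
Qed.

Lemma derivation_to_frame D :
  is_derivation a D -> is_derivation_for b (P *m D *m invmx P).
Proof.
have [uP _ _] := orthoframe_unit hP.
move=> hD u v; apply: (can_inj (mulmxK uP)).
have e x : x *m (P *m D *m invmx P) *m P = x *m P *m D.
  by rewrite !mulmxA mulmxKV.
by rewrite mulmxDl -!hb !e -hb hD.
Qed.

Lemma derivation_from_frame D :
  is_derivation_for b D -> is_derivation a (invmx P *m D *m P).
Proof.
have [uP _ _] := orthoframe_unit hP.
move=> hD x y; rewrite !mulmxA.
have inP (z : vec) : z = z *m invmx P *m P by rewrite mulmxKV.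
rewrite {1}(inP x) {1}(inP y) hb (mulmxK uP) hD mulmxDl.
by rewrite -!hb -?(inP x) -?(inP y).
Qed.

Lemma soliton_orthoframe :
  (exists (c : R) (D : 'M[R]_3), is_derivation a D /\
     forall X, ricci a G (fun i => bv i *m P) X = c *: X + X *m D)
  <-> std_soliton b.
Proof.
have [uP _ _] := orthoframe_unit hP.
have inP (z : vec) : z = z *m invmx P *m P by rewrite mulmxKV.
split=> -[c [D [hD hric]]].
- exists c, (P *m D *m invmx P); split; first exact: derivation_to_frame.
  move=> u; apply: (can_inj (mulmxK uP)).
  by rewrite -ricci_orthoframe hric mulmxDl -scalemxAl !mulmxA mulmxKV.
- exists c, (invmx P *m D *m P); split; first exact: derivation_from_frame.
  move=> X; rewrite {1}(inP X) ricci_orthoframe hric mulmxDl -scalemxAl -inP.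
  by rewrite !mulmxA.
Qed.

End Transport.
End EuclideanModel.

Section GramSchmidtBracket.
Variable R : realFieldType.
Local Notation vec := 'rV[R]_3.
Implicit Types (u v w : vec).
Variables (l m a : R).

(* The bracket of r_{3,a} in the coordinates of a Gram-Schmidt basis of
   (e_2, e_3, e_1): [f_1, f_2] = l f_2, [f_1, f_3] = m f_2 + l a f_3. *)
Definition gsbr u v : vec :=
  row3 0 (l * (u ord0 i0 * v ord0 i1 - u ord0 i1 * v ord0 i0)
          + m * (u ord0 i0 * v ord0 i2 - u ord0 i2 * v ord0 i0))
       (l * a * (u ord0 i0 * v ord0 i2 - u ord0 i2 * v ord0 i0)).

Lemma gsbrE0 u v : gsbr u v ord0 i0 = 0. Proof. exact: row3E0. Qed.
Lemma gsbrE1 u v : gsbr u v ord0 i1 =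
  l * (u ord0 i0 * v ord0 i1 - u ord0 i1 * v ord0 i0)
  + m * (u ord0 i0 * v ord0 i2 - u ord0 i2 * v ord0 i0).
Proof. exact: row3E1. Qed.
Lemma gsbrE2 u v : gsbr u v ord0 i2 =
  l * a * (u ord0 i0 * v ord0 i2 - u ord0 i2 * v ord0 i0).
Proof. exact: row3E2. Qed.

Local Notation x0 u := (u ord0 i0).
Local Notation x1 u := (u ord0 i1).
Local Notation x2 u := (u ord0 i2).

Lemma std_nabla_gsbrE0 u v : std_nabla gsbr u v ord0 i0 =
  l * x1 u * x1 v + m / 2 * x1 u * x2 v + m / 2 * x2 u * x1 v + l * a * x2 u * x2 v.
Proof.
rewrite /std_nabla vscaleE mxE bvec0 /dot !gsbrE0 !gsbrE1 !gsbrE2 !row3E0 !row3E1 !row3E2.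
by field.
Qed.
Lemma std_nabla_gsbrE1 u v : std_nabla gsbr u v ord0 i1 =
  m / 2 * x0 u * x2 v - l * x1 u * x0 v - m / 2 * x2 u * x0 v.
Proof.
rewrite /std_nabla vscaleE mxE bvec1 /dot !gsbrE0 !gsbrE1 !gsbrE2 !row3E0 !row3E1 !row3E2.
by field.
Qed.
Lemma std_nabla_gsbrE2 u v : std_nabla gsbr u v ord0 i2 =
  - (m / 2) * x0 u * x1 v - m / 2 * x1 u * x0 v - l * a * x2 u * x0 v.
Proof.
rewrite /std_nabla vscaleE mxE bvec2 /dot !gsbrE0 !gsbrE1 !gsbrE2 !row3E0 !row3E1 !row3E2.
by field.
Qed.

Lemma std_curvE u v w i : std_curv gsbr u v w ord0 i =
  std_nabla gsbr u (std_nabla gsbr v w) ord0 i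
  - std_nabla gsbr v (std_nabla gsbr u w) ord0 i
  - std_nabla gsbr (gsbr u v) w ord0 i.
Proof. by rewrite /std_curv !mxE. Qed.

Lemma std_ricci_gsbr u : std_ricci gsbr u =
  row3 (- (l ^+ 2 * (1 + a ^+ 2) + m ^+ 2 / 2) * x0 u)
       ((m ^+ 2 / 2 - l ^+ 2 * (1 + a)) * x1 u - l * m * x2 u)
       (- (l * m) * x1 u - (m ^+ 2 / 2 + l ^+ 2 * a * (1 + a)) * x2 u).
Proof.
apply: vec3P; rewrite /std_ricci !summxE sum_ord3 !std_curvE bvec0 bvec1 bvec2
  !(std_nabla_gsbrE0, std_nabla_gsbrE1, std_nabla_gsbrE2) !(gsbrE0, gsbrE1, gsbrE2)
  !(row3E0, row3E1, row3E2); by field.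
Qed.

End GramSchmidtBracket.

Section GramSchmidtSolitons.
Variable R : realFieldType.
Local Notation vec := 'rV[R]_3.
Local Notation bv := (bvec R).

Lemma mul_diag_row3 (u : vec) x y z : u *m diag_mx (row3 x y z) =
  row3 (u ord0 i0 * x) (u ord0 i1 * y) (u ord0 i2 * z).
Proof.
by rewrite mul_mx_diag; apply: vec3P; rewrite !mxE !(row3E0, row3E1, row3E2).
Qed.

(* In the basis (f_i): the f_3-component of the derivation rule on (f_1, f_2)
   reads l D_23 = l a D_23, and the soliton equation at f_2 gives D_23 = - l m. *)
Lemma gsbr_soliton_m0 (l m a : R) : l != 0 -> a != 1 ->
  std_soliton (gsbr l m a) -> m = 0.
Proof.
move=> hl ha [c [D [hD hR]]].
have h1 := congr1 (fun w : vec => w ord0 i2) (hD (bv i0) (bv i1)).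
have h2 := congr1 (fun w : vec => w ord0 i2) (hR (bv i1)).
move: h1 h2; rewrite /= !vaddE !vmulmxE !vscaleE std_ricci_gsbr !gsbrE0 !gsbrE1
  !gsbrE2 !vmulmxE bvec0 bvec1 !(row3E0, row3E1, row3E2) => h1 h2.
have eD : D i1 i2 = - (l * m).
  transitivity (c * 0 + (0 * D i0 i2 + 1 * D i1 i2 + 0 * D i2 i2)); first by ring.
  by rewrite -h2; ring.
have : l * l * (a - 1) * m = 0.
  by move: h1; rewrite eD => /eqP; rewrite -subr_eq0 => /eqP <-; ring.
by move/eqP; rewrite !mulf_eq0 (negbTE hl) subr_eq0 (negbTE ha) /= => /eqP.
Qed.

Lemma gsbr0_soliton (l a : R) : std_soliton (gsbr l 0 a).
Proof.
exists (- (l ^+ 2 * (1 + a ^+ 2))),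
  (diag_mx (row3 0 (l ^+ 2 * (a ^+ 2 - a)) (l ^+ 2 * (1 - a)))).
split.
- move=> u v; rewrite !mul_diag_row3; apply: vec3P;
  rewrite ?vaddE !(gsbrE0, gsbrE1, gsbrE2) !(row3E0, row3E1, row3E2)
    ?(gsbrE0, gsbrE1, gsbrE2); ring.
- move=> u; rewrite std_ricci_gsbr mul_diag_row3; apply: vec3P;
  rewrite !vaddE !vscaleE !(row3E0, row3E1, row3E2); ring.
Qed.

Lemma gsbr0_scale (l a : R) (u v : vec) : gsbr l 0 a u v = l *: br a u v.
Proof.
apply: vec3P; rewrite vscaleE !(gsbrE0, gsbrE1, gsbrE2) !(brE0, brE1, brE2); ring.
Qed.

End GramSchmidtSolitons.

Section Frames.
Variable R : realFieldType.
Local Notation vec := 'rV[R]_3.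
Implicit Types (p q r : vec).

Definition triple p q r (i : 'I_3) : vec :=
  if val i == 0%N then p else if val i == 1%N then q else r.

Lemma rows_tripleE0 p q r j : rows_mx (triple p q r) i0 j = p ord0 j.
Proof. by rewrite mxE. Qed.
Lemma rows_tripleE1 p q r j : rows_mx (triple p q r) i1 j = q ord0 j.
Proof. by rewrite mxE. Qed.
Lemma rows_tripleE2 p q r j : rows_mx (triple p q r) i2 j = r ord0 j.
Proof. by rewrite mxE. Qed.

Lemma orthonormal_triple G p q r : G^T = G ->
  ip G p p = 1 -> ip G q q = 1 -> ip G r r = 1 ->
  ip G p q = 0 -> ip G p r = 0 -> ip G q r = 0 ->
  orthonormal_basis G (triple p q r).
Proof.
move=> hs h1 h2 h3 h4 h5 h6 i j; rewrite /triple.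
have s := ip_sym (G := G) _ _ hs.
case: i => [[|[|[|i]]] Hi] //; case: j => [[|[|[|j]]] Hj] //=;
  by rewrite ?h1 ?h2 ?h3 ?(s q p) ?(s r p) ?(s r q) ?h4 ?h5 ?h6.
Qed.

Lemma gsbr_in_frame (a l mu nu be de t : R) :
  bracket_in_frame a
    (rows_mx (triple (row3 l mu nu) (row3 0 be 0) (row3 0 (t * be) de)))
    (gsbr l (l * (1 - a) * t) a).
Proof.
move=> u v; apply: vec3P;
rewrite !(brE0, brE1, brE2) !vmulmxE !(rows_tripleE0, rows_tripleE1, rows_tripleE2)
  !(gsbrE0, gsbrE1, gsbrE2) !(row3E0, row3E1, row3E2); ring.
Qed.

End Frames.

Lemma unit_rescaling (R : rcfType) (G : 'M[R]_3) (v : 'rV[R]_3) :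
  0 < ip G v v -> exists2 s : R, 0 < s & ip G (s *: v) (s *: v) = 1.
Proof.
move=> hv; exists (Num.sqrt (ip G v v))^-1; first by rewrite invr_gt0 sqrtr_gt0.
by rewrite ip_scalel ip_scaler mulrA -expr2 exprVn sqr_sqrtr ?mulVf ?ltW ?gt_eqF.
Qed.

Lemma gram_schmidt_frame (R : rcfType) (a : R) (G : 'M[R]_3) :
  is_inner_product G -> exists (l m : R) (P : 'M[R]_3),
    [/\ 0 < l, orthoframe G P & bracket_in_frame a P (gsbr l m a)].
Proof.
case=> hs hpos.
have pos_of (v : 'rV[R]_3) i : v ord0 i = 1 -> 0 < ip G v v.
  by move/vec3_neq0; apply: hpos.
have [s2 _ n2] := unit_rescaling (pos_of (bvec R i1) i1 (bvecE _ _ _)).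
set f2 := s2 *: bvec R i1 in n2 *.
have f2E : f2 = row3 0 s2 0.
  by rewrite /f2 bvec1; apply: vec3P; rewrite !vscaleE !(row3E0, row3E1, row3E2); ring.
clearbody f2.
pose k := ip G (bvec R i2) f2; pose w3 := bvec R i2 - k *: f2.
have w3_2 : w3 ord0 i2 = 1 by rewrite vsubE vscaleE f2E bvec2 !row3E2; ring.
have [s3 _ n3] := unit_rescaling (pos_of w3 i2 w3_2).
set f3 := s3 *: w3 in n3 *.
have f3E : f3 = row3 0 (- (s3 * k) * s2) s3.
  by rewrite /f3 /w3 f2E bvec2; apply: vec3P;
    rewrite !vscaleE !vsubE !vscaleE !(row3E0, row3E1, row3E2); ring.
have o23 : ip G f2 f3 = 0.
  by rewrite ip_sym // /f3 /w3 ip_scalel ip_subl ip_scalel n2 -/k; ring.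
clearbody f3 w3.
pose k1 := ip G (bvec R i0) f2; pose k2 := ip G (bvec R i0) f3.
pose w1 := bvec R i0 - k1 *: f2 - k2 *: f3.
have w1_0 : w1 ord0 i0 = 1 by rewrite /w1 f2E f3E bvec0 !vsubE !vscaleE !row3E0; ring.
have [s1 s1_gt0 n1] := unit_rescaling (pos_of w1 i0 w1_0).
set f1 := s1 *: w1 in n1 *.
have o12 : ip G f1 f2 = 0.
  by rewrite /f1 /w1 ip_scalel !ip_subl !ip_scalel n2 (ip_sym f3 f2 hs) o23 -/k1; ring.
have o13 : ip G f1 f3 = 0.
  by rewrite /f1 /w1 ip_scalel !ip_subl !ip_scalel n3 o23 -/k2; ring.
have f1E : f1 = row3 s1 (f1 ord0 i1) (f1 ord0 i2).
  by apply: vec3P; rewrite ?row3E0 ?row3E1 ?row3E2 // vscaleE w1_0 mulr1.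
exists s1, (s1 * (1 - a) * - (s3 * k)), (rows_mx (triple f1 f2 f3)); split=> //.
  exact/orthonormal_basis_frame/orthonormal_triple.
by rewrite [in X in bracket_in_frame _ X]f1E f2E f3E; apply: gsbr_in_frame.
Qed.

Lemma orthoframe_iso (R : realFieldType) (a l : R) (G P : 'M[R]_3) : 0 < l ->
  orthoframe G P -> bracket_in_frame a P (gsbr l 0 a) -> iso_up_to_scaling a G 1%:M.
Proof.
move=> l_gt0 hP hb; have [uP _ _] := orthoframe_unit hP.
have l_neq0 : l != 0 by rewrite gt_eqF.
have inP (z : 'rV[R]_3) : z = z *m invmx P *m P by rewrite mulmxKV.
exists (l ^- 2), (l *: invmx P); split; first by rewrite invr_gt0 exprn_gt0.
split; first split.
- by rewrite unitmxZ ?unitmx_inv // unitfE.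
- move=> u v; rewrite -!scalemxAr br_scalel br_scaler [in RHS](inP u) [in RHS](inP v).
  by rewrite hb gsbr0_scale -!scalemxAl (mulmxK uP).
- move=> u v; rewrite [in LHS](inP u) [in LHS](inP v) ((orthoframe_ipP G P).1 hP).
  by rewrite -!scalemxAr ip_scalel ip_scaler ip_id_dot; field.
Qed.

Lemma iso_orthoframe (R : rcfType) (a : R) (G : 'M[R]_3) :
  iso_up_to_scaling a G 1%:M ->
  exists (l : R) (P : 'M[R]_3), orthoframe G P /\ bracket_in_frame a P (gsbr l 0 a).
Proof.
case=> k [f [k_gt0 [[uf hf] hip]]].
pose s := (Num.sqrt k)^-1; pose P := s *: invmx f.
have ks : k * (s * s) = 1.
  by rewrite -expr2 exprVn sqr_sqrtr ?mulfV ?ltW ?gt_eqF.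
exists s, P; split.
  apply/orthoframe_ipP => u v; rewrite hip /P -!scalemxAr -!scalemxAl !(mulmxKV uf).
  by rewrite ip_scalel ip_scaler ip_id_dot !mulrA -(mulrA k) ks mul1r.
move=> u v; rewrite /P -!scalemxAr br_scalel br_scaler gsbr0_scale -scalemxAl.
by congr (_ *: (_ *: _)); rewrite -[LHS](mulmxK uf) -hf !(mulmxKV uf).
Qed.

Unset Implicit Arguments.
Set Strict Implicit.
Theorem proposition4p9 (R : realType) (a : R) (ha1 : -1 <= a) (ha2 : a < 1)
  (G : 'M[R]_3) (hG : is_inner_product G) :
  solvsoliton a G <-> iso_up_to_scaling a G 1%:M.
Proof.
have a_neq1 : a != 1 by rewrite lt_eqF.
split.
- case=> F [hF [c [D [hD hric]]]].
  have [l [m [P [l_gt0 hP hb]]]] := gram_schmidt_frame a hG.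
  have hsol : std_soliton (gsbr l m a).
    apply/(soliton_orthoframe hP hb); exists c, D; split=> // X.
    by rewrite (ricci_basis_indep _ _ hG.1 hF (orthoframe_basis hP)).
  have m0 := gsbr_soliton_m0 (lt0r_neq0 l_gt0) a_neq1 hsol.
  by rewrite m0 in hb; apply: orthoframe_iso l_gt0 hP hb.
- case/iso_orthoframe => l [P [hP hb]].
  exists (fun i => bvec R i *m P); split; first exact: orthoframe_basis.
  exact/(soliton_orthoframe hP hb)/gsbr0_soliton.
Qed.
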